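(* For a positive integer $k$ and $\theta>0$, define $g_k(\theta)=\frac{-ke^{-\theta}}{(1-e^{-\theta})^2}+\sum_{j=1}^{k}\frac{j^2e^{-\theta j}}{(1-e^{-\theta j})^2}$. Then $g_k$ is non-positive and increasing in $\theta$ for $\theta>4\ln(2)$. Additionally, $g_k$ is decreasing in $k$. *)

From Stdlib Require Import Reals.
Open Scope R_scope.

Fixpoint sum_1_to (f : nat -> R) (k : nat) : R :=
  match k with
  | O => 0
  | S k' => sum_1_to f k' + f (S k')
  end.

Definition g (k : nat) (theta : R) : R :=
  - INR k * exp (- theta) / (1 - exp (- theta)) ^ 2
  + sum_1_to (fun j => (INR j) ^ 2 * exp (- theta * INR j)
                         / (1 - exp (- theta * INR j)) ^ 2) k.

(** Write the j-th summand of [g k] as [F j θ] ([g_summand]) with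
    [F j θ = j² e^{-jθ} / (1 - e^{-jθ})² = (j / (2 sinh (jθ/2)))²], so that
    [g k θ = Σ_{j=1}^{k} (F j θ - F 1 θ)].  Superlinearity of [sinh] on
    [[0, ∞)], [j sinh a <= sinh (j a)], gives [F j <= F 1]: hence [g k <= 0]
    and [g (k+1) - g k = F (k+1) - F 1 <= 0].  For monotonicity in θ it
    suffices that [F j - F 1] is nondecreasing.  With [x = e^{-θ}],
    [-∂θ F j = j³ ψ(x^j)] where [ψ u = u (1 + u) / (1 - u)³] is nondecreasing;
    since [j³ <= 16^(j-1)], the condition [x < 1/16] (i.e. [θ > 4 ln 2]) gives
    [j³ x^j <= x], hence [j³ ψ(x^j) <= ψ(x)]. *)

From Stdlib Require Import Reals Lra Lia Psatz.
From Coquelicot Require Import Coquelicot.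
Open Scope R_scope.

Lemma sum_1_to_le (f1 f2 : nat -> R) (k : nat) :
  (forall j, f1 (S j) <= f2 (S j)) -> sum_1_to f1 k <= sum_1_to f2 k.
Proof. intros H; induction k as [|k IH]; simpl; [lra | specialize (H k); lra]. Qed.

Lemma sum_1_to_nonpos (f : nat -> R) (k : nat) :
  (forall j, f (S j) <= 0) -> sum_1_to f k <= 0.
Proof. intros H; induction k as [|k IH]; simpl; [lra | specialize (H k); lra]. Qed.

Lemma sum_1_to_sub_const (f : nat -> R) (c : R) (k : nat) :
  sum_1_to (fun j => f j - c) k = sum_1_to f k - INR k * c.
Proof.
  induction k as [|k IH]; simpl sum_1_to; [simpl; ring |].
  rewrite IH, S_INR; ring.
Qed.

Lemma sinh_plus x y : sinh (x + y) = sinh x * cosh y + cosh x * sinh y.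
Proof. unfold sinh, cosh; rewrite Ropp_plus_distr, !exp_plus; field. Qed.

Lemma cosh_ge_1 x : 1 <= cosh x.
Proof.
  unfold cosh; rewrite exp_Ropp.
  pose proof (exp_pos x) as He; set (e := exp x) in *.
  replace ((e + / e) / 2) with (1 + (e - 1) ^ 2 * / (2 * e)) by (field; lra).
  assert (0 <= (e - 1) ^ 2 * / (2 * e)) by (apply Rle_mult_inv_pos; [apply pow2_ge_0 | lra]).
  lra.
Qed.

Lemma sinh_nonneg x : 0 <= x -> 0 <= sinh x.
Proof.
  intros [Hx | <-].
  - rewrite <- sinh_0; left; now apply sinh_lt.
  - rewrite sinh_0; lra.
Qed.

Lemma sinh_superlinear (n : nat) (a : R) :
  0 <= a -> INR n * sinh a <= sinh (INR n * a).
Proof.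
  intros Ha; induction n as [|n IH].
  - simpl; rewrite !Rmult_0_l, sinh_0; lra.
  - replace (INR (S n) * a) with (INR n * a + a) by (rewrite S_INR; ring).
    rewrite sinh_plus, S_INR.
    pose proof (cosh_ge_1 a); pose proof (cosh_ge_1 (INR n * a)).
    pose proof (sinh_nonneg a Ha).
    pose proof (sinh_nonneg (INR n * a) (Rmult_le_pos _ _ (pos_INR n) Ha)).
    nra.
Qed.

Lemma exp_neg_div_sinh s :
  0 < s -> exp (- s) / (1 - exp (- s)) ^ 2 = / (2 * sinh (s / 2)) ^ 2.
Proof.
  intros Hs; unfold sinh; rewrite (exp_Ropp (s / 2)).
  replace (exp (- s)) with (/ (exp (s / 2) * exp (s / 2)))
    by (rewrite <- exp_plus, <- exp_Ropp; f_equal; lra).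
  assert (1 < exp (s / 2)) by (rewrite <- exp_0; apply exp_increasing; lra).
  field; split; nra.
Qed.

Definition g_summand (n : nat) (t : R) : R :=
  INR n ^ 2 * exp (- t * INR n) / (1 - exp (- t * INR n)) ^ 2.

Lemma g_eq_sum_sub_first k t :
  g k t = sum_1_to (fun j => g_summand j t - g_summand 1 t) k.
Proof.
  rewrite sum_1_to_sub_const.
  unfold g, g_summand; simpl INR; rewrite Rmult_1_r.
  unfold Rdiv; ring.
Qed.

Lemma g_summand_sinh n t :
  (1 <= n)%nat -> 0 < t -> g_summand n t = (INR n / (2 * sinh (INR n * t / 2))) ^ 2.
Proof.
  intros Hn Ht.
  assert (Hnt : 0 < INR n * t) by (apply Rmult_lt_0_compat; [apply lt_0_INR; lia | lra]).
  assert (0 < sinh (INR n * t / 2)) by (rewrite <- sinh_0; apply sinh_lt; lra).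
  unfold g_summand; replace (- t * INR n) with (- (INR n * t)) by ring.
  rewrite <- Rmult_div_assoc, (exp_neg_div_sinh _ Hnt).
  field; lra.
Qed.

Lemma g_summand_le_first n t : (1 <= n)%nat -> 0 < t -> g_summand n t <= g_summand 1 t.
Proof.
  intros Hn Ht; rewrite !g_summand_sinh by (lia || lra).
  change (INR 1) with 1; rewrite Rmult_1_l.
  assert (Hs1 : 0 < sinh (t / 2)) by (rewrite <- sinh_0; apply sinh_lt; lra).
  pose proof (sinh_superlinear n (t / 2) ltac:(lra)) as Hsup.
  replace (INR n * (t / 2)) with (INR n * t / 2) in Hsup by field.
  assert (1 <= INR n) by (apply (le_INR 1); lia).
  apply pow_incr; split.
  - apply Rle_mult_inv_pos; nra.
  - apply Rmult_le_reg_r with (2 * sinh (INR n * t / 2) * (2 * sinh (t / 2))); [nra |].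
    field_simplify; nra.
Qed.

Definition psi (u : R) : R := u * (1 + u) / (1 - u) ^ 3.

Definition g_summand_deriv (n : nat) (t : R) : R :=
  - INR n ^ 3 * psi (exp (- t * INR n)).

Lemma exp_neg_mul_INR t n : exp (- t * INR n) = exp (- t) ^ n.
Proof.
  induction n as [|n IH]; [simpl; rewrite Rmult_0_r; apply exp_0 |].
  rewrite S_INR, Rmult_plus_distr_l, Rmult_1_r, exp_plus, IH; simpl; ring.
Qed.

Lemma g_summand_derivable n t :
  (1 <= n)%nat -> 0 < t -> derivable_pt_lim (g_summand n) t (g_summand_deriv n t).
Proof.
  intros Hn Ht; apply is_derive_Reals; unfold g_summand, g_summand_deriv, psi.
  assert (exp (- t * INR n) < 1).
  { rewrite <- exp_0; apply exp_increasing.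
    assert (1 <= INR n) by (apply (le_INR 1); lia); nra. }
  auto_derive.
  - apply Rmult_integral_contrapositive_currified; [lra |].
    apply Rmult_integral_contrapositive_currified; lra.
  - field; lra.
Qed.

Lemma succ_cube_le_pow16 j : INR (S j) ^ 3 <= 16 ^ j.
Proof.
  induction j as [|j IH]; [simpl; lra |].
  change (16 ^ S j) with (16 * 16 ^ j).
  rewrite !S_INR in *; pose proof (pos_INR j).
  assert ((INR j + 1 + 1) ^ 3 <= 16 * (INR j + 1) ^ 3) by nra.
  lra.
Qed.

Lemma psi_pow_le x j : 0 < x <= / 16 -> INR (S j) ^ 3 * psi (x ^ S j) <= psi x.
Proof.
  intros Hx; unfold psi.
  assert (Hcube : INR (S j) ^ 3 * x ^ j <= 1).
  { apply Rle_trans with (16 ^ j * (/ 16) ^ j).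
    - apply Rmult_le_compat; [apply pow_le, pos_INR | apply pow_le; lra |
                              apply succ_cube_le_pow16 | apply pow_incr; lra].
    - rewrite <- Rpow_mult_distr, Rinv_r, pow1 by lra; lra. }
  assert (Hxj : 0 < x ^ j <= 1).
  { split; [apply pow_lt; lra |].
    rewrite <- (pow1 j); apply pow_incr; lra. }
  change (x ^ S j) with (x * x ^ j); set (u := x * x ^ j).
  assert (Hu : 0 < u <= x) by (unfold u; split; nra).
  replace (INR (S j) ^ 3 * (u * (1 + u) / (1 - u) ^ 3))
    with (INR (S j) ^ 3 * x ^ j * (x * (1 + u) / (1 - u) ^ 3))
    by (unfold u, Rdiv; ring).
  assert (0 < (1 - x) ^ 3) by (apply pow_lt; lra).
  assert ((1 - x) ^ 3 <= (1 - u) ^ 3) by (apply pow_incr; lra).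
  apply Rle_trans with (x * (1 + u) / (1 - u) ^ 3).
  - assert (0 <= x * (1 + u) / (1 - u) ^ 3) by (apply Rle_mult_inv_pos; nra).
    nra.
  - apply Rmult_le_compat; [nra | apply Rlt_le, Rinv_0_lt_compat; lra | nra |].
    now apply Rinv_le_contravar.
Qed.

Lemma exp_neg_lt_inv16 c : 4 * ln 2 < c -> exp (- c) < / 16.
Proof.
  intros Hc; replace (/ 16) with (exp (ln (/ 16))) by (apply exp_ln; lra).
  apply exp_increasing; rewrite ln_Rinv by lra.
  replace 16 with (2 ^ 4) by ring; rewrite ln_pow by lra.
  simpl INR; lra.
Qed.

Lemma g_summand_deriv_ge_first n c :
  (1 <= n)%nat -> 4 * ln 2 < c -> g_summand_deriv 1 c <= g_summand_deriv n c.
Proof.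
  intros Hn Hc; destruct n as [|j]; [lia |].
  pose proof (exp_pos (- c)); pose proof (exp_neg_lt_inv16 c Hc).
  pose proof (psi_pow_le (exp (- c)) j ltac:(lra)).
  unfold g_summand_deriv; rewrite !exp_neg_mul_INR.
  change (INR 1) with 1; rewrite pow1, pow_1.
  lra.
Qed.

Lemma g_summand_sub_first_nondecreasing n t1 t2 :
  (1 <= n)%nat -> 4 * ln 2 < t1 -> t1 <= t2 ->
  g_summand n t1 - g_summand 1 t1 <= g_summand n t2 - g_summand 1 t2.
Proof.
  intros Hn H1 [H2 | <-]; [| lra].
  pose proof ln_lt_2.
  destruct (MVT_cor2 (fun t => g_summand n t - g_summand 1 t)
              (fun t => g_summand_deriv n t - g_summand_deriv 1 t) t1 t2 H2)
    as [c [Hc1 Hc2]].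
  { intros c Hc; apply derivable_pt_lim_minus; apply g_summand_derivable; lia || lra. }
  assert (g_summand_deriv 1 c <= g_summand_deriv n c)
    by (apply g_summand_deriv_ge_first; lia || lra).
  assert (0 <= (g_summand_deriv n c - g_summand_deriv 1 c) * (t2 - t1))
    by (apply Rmult_le_pos; lra).
  lra.
Qed.

Theorem mainTheorem5 :
  (forall (k : nat) (theta : R), (1 <= k)%nat -> 4 * ln 2 < theta ->
     g k theta <= 0) /\
  (forall (k : nat) (t1 t2 : R), (1 <= k)%nat -> 4 * ln 2 < t1 -> t1 <= t2 ->
     g k t1 <= g k t2) /\
  (forall (k : nat) (theta : R), (1 <= k)%nat -> 0 < theta ->
     g (S k) theta <= g k theta).
Proof.
  pose proof ln_lt_2.
  split; [| split].
  - intros k t _ Ht; rewrite g_eq_sum_sub_first.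
    apply sum_1_to_nonpos; intros j.
    assert (g_summand (S j) t <= g_summand 1 t) by (apply g_summand_le_first; lia || lra).
    lra.
  - intros k t1 t2 _ H1 H2; rewrite !g_eq_sum_sub_first.
    apply sum_1_to_le; intros j.
    apply g_summand_sub_first_nondecreasing; lia || lra.
  - intros k t _ Ht; rewrite !g_eq_sum_sub_first; simpl sum_1_to.
    assert (g_summand (S k) t <= g_summand 1 t) by (apply g_summand_le_first; lia || lra).
    lra.
Qed.
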